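(* Let $R$ be a local ring with Jacobson radical $J(R)$, set $\overline{R}=R/J(R)$, and let $C_n$ be a cyclic group of order $n$ (a positive integer). If the characteristic of $\overline{R}$ is not $2$, then the group ring $RC_n$ is 2-good.
   Context: A ring $S$ (associative with identity) is called $n$-good if every element of $S$ is a sum of $n$ units of $S$. A local ring is a ring $R$ in which $R/J(R)$ is a division ring. *)

From HB Require Import structures.
From mathcomp Require Import all_boot all_order all_algebra.
Set Implicit Arguments. Unset Strict Implicit. Unset Printing Implicit Defensive.
Import Order.TTheory GRing.Theory Num.Theory.
Local Open Scope ring_scope.

Definition jacobson (R : unitRingType) (x : R) : Prop :=
  forall r : R, (1 - r * x) \is a GRing.unit.

(* R is local: R / J(R) is a division ring, i.e. the quotient is nonzero
   (1 \notin J(R)) and every class x + J(R) with x \notin J(R) has a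
   two-sided inverse modulo J(R). *)
Definition local_ring (R : unitRingType) : Prop :=
  ~ jacobson (1 : R) /\
  forall x : R, ~ jacobson x ->
    exists y : R, jacobson (x * y - 1) /\ jacobson (y * x - 1).

(* char (R / J(R)) <> 2  <->  1 + 1 <> 0 in R / J(R)  <->  2 \notin J(R). *)
Definition char_quot_not2 (R : unitRingType) : Prop := ~ jacobson (2%:R : R).

(* The group ring R C_n, with C_n modelled as Z/nZ = 'I_n under addition
   mod n (n > 0); elements are functions 'I_n -> R, addition is pointwise. *)
Definition grring (R : unitRingType) (n : nat) := {ffun 'I_n -> R}.

Definition gr_mul (R : unitRingType) (n : nat) (a b : grring R n) : grring R n :=
  [ffun k : 'I_n => \sum_(i < n) \sum_(j < n)
                      (if ((i + j) %% n)%N == val k then a i * b j else 0)].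

Definition gr_one (R : unitRingType) (n : nat) : grring R n :=
  [ffun k : 'I_n => if val k == 0%N then 1 else 0].

Definition gr_unit (R : unitRingType) (n : nat) (u : grring R n) : Prop :=
  exists v : grring R n, gr_mul u v = gr_one R n /\ gr_mul v u = gr_one R n.

Definition gr_two_good (R : unitRingType) (n : nat) : Prop :=
  forall a : grring R n, exists u v : grring R n,
    gr_unit u /\ gr_unit v /\ a = u + v.

(* Let I be the two-sided ideal of R C_n of the elements whose coefficients all
   lie in J = J(R).  For x in I, the multiplication matrix of 1 + x is the
   identity modulo J, so Gaussian elimination over R inverts it: I lies in the
   Jacobson radical of R C_n and units lift modulo I.
   As R/J is a division ring, the n + 1 powers a^0, ..., a^n of any a in R C_n
   are dependent modulo I, on either side, with a coefficient outside J.  In the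
   quotient this makes a strongly pi-regular, a^k = a^(k+1) x = y a^(k+1), hence
   there is an idempotent p commuting with a such that ap is a unit of the corner
   ring pRp and a(1 - p) is nilpotent.  With q = 1 - p,
     a = (2ap + (1 + aq) q) - (ap + q)
   is a sum of two units, because 2 is invertible. *)

From HB Require Import structures.
From mathcomp Require Import all_boot all_order all_algebra.
From mathcomp Require Import generic_quotient boolp.
Set Implicit Arguments. Unset Strict Implicit. Unset Printing Implicit Defensive.
Import GRing.Theory.
Local Open Scope ring_scope.
Local Open Scope quotient_scope.

Section CornerUnits.
Variable T : pzRingType.
Implicit Types (a e x y c : T).

Definition invertible x := exists y, x * y = 1 /\ y * x = 1.

Definition in_corner e x := e * x = x /\ x * e = x.

Definition corner_unit e x :=
  in_corner e x /\ exists2 x', in_corner e x' & x * x' = e /\ x' * x = e.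

Lemma corner_unit_idem e : e * e = e -> corner_unit e e.
Proof. by move=> ee; split=> //; exists e. Qed.

Lemma corner_unitMl e c c' x : c * c' = 1 -> c' * c = 1 -> c * e = e * c ->
  corner_unit e x -> corner_unit e (c * x).
Proof.
move=> cc' c'c ce [[ex xe] [x' [ex' x'e] [xx' x'x]]].
have c'e : c' * e = e * c'.
  by rewrite -[c' * e]mulr1 -cc' mulrA -(mulrA c') -ce mulrA c'c mul1r.
split; first by split; rewrite ?mulrA -?ce -mulrA ?ex ?xe.
exists (x' * c'); first by split; rewrite ?mulrA ?ex' // -mulrA c'e mulrA x'e.
split; first by rewrite mulrA -(mulrA c) xx' ce -mulrA cc' mulr1.
by rewrite -mulrA (mulrA c') c'c mul1r x'x.
Qed.

Lemma corner_unitD e x y : e * e = e ->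
  corner_unit e x -> corner_unit (1 - e) y -> invertible (x + y).
Proof.
move=> ee [[ex xe] [x' [ex' x'e] [xx' x'x]]] [[fy yf] [y' [fy' y'f] [yy' y'y]]].
have ef : e * (1 - e) = 0 by rewrite mulrBr mulr1 ee subrr.
have fe : (1 - e) * e = 0 by rewrite mulrBl mul1r ee subrr.
have xy' : x * y' = 0 by rewrite -xe -fy' mulrA -(mulrA x) ef mulr0 mul0r.
have x'y : x' * y = 0 by rewrite -x'e -fy mulrA -(mulrA x') ef mulr0 mul0r.
have yx' : y * x' = 0 by rewrite -yf -ex' mulrA -(mulrA y) fe mulr0 mul0r.
have y'x : y' * x = 0 by rewrite -y'f -ex mulrA -(mulrA y') fe mulr0 mul0r.
exists (x' + y'); rewrite !mulrDl !mulrDr xx' xy' yx' yy' x'x x'y y'x y'y.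
by rewrite !addr0 !add0r subrKC.
Qed.

Lemma invertible_of_mul x y z : invertible (x * y) -> invertible (z * x) -> invertible x.
Proof.
move=> [r [xyr _]] [l [_ lzx]].
have lz_yr : l * z = y * r.
  by rewrite -[l * z]mulr1 -xyr !mulrA -(mulrA l z x) lzx mul1r.
by exists (y * r); rewrite -{2}lz_yr -mulrA lzx mulrA xyr.
Qed.

Lemma invertible_1D_nilpotent N k : N ^+ k = 0 -> invertible (1 + N).
Proof.
move=> Nk0; pose M := \sum_(i < k) (- N) ^+ i.
have MN : GRing.comm M N.
  by apply/commr_sym/commr_sum => i _; apply/commrX/commrN/commr_refl.
have NM1 : (1 + N) * M = 1.
  have := subrX1 (- N) k; rewrite exprNn Nk0 mulr0 sub0r -opprD mulNr => /eqP.
  by rewrite eqr_opp addrC => /eqP <-.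
by exists M; split=> //; rewrite mulrDr mulr1 MN -[X in X + _]mul1r -mulrDl.
Qed.

Lemma sum_two_units_of_fitting (a p h : T) : p * p = p -> a * p = p * a ->
  corner_unit p (a * p) -> (exists k, (a * (1 - p)) ^+ k = 0) ->
  h * 2 = 1 -> 2 * h = 1 -> exists u v, [/\ invertible u, invertible v & a = u + v].
Proof.
move=> pp ap apU [k nil] h2 h2'; set q := 1 - p.
have qq : q * q = q by rewrite /q mulrBl mul1r mulrBr mulr1 pp subrr subr0.
have qa : q * a = a * q by rewrite /q mulrBl mulrBr mul1r mulr1 ap.
have [c' [cc' c'c]] := invertible_1D_nilpotent nil.
have mulN1N1 : (-1) * (-1) = 1 :> T by rewrite mulrNN mulr1.
have pU2 : corner_unit p (2 * (a * p)).
  by apply: corner_unitMl h2' h2 _ apU; apply/esym/commr_nat.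
have qU : corner_unit q ((1 + a * q) * q).
  apply: corner_unitMl cc' c'c _ (corner_unit_idem qq).
  by rewrite [LHS]mulrDl [RHS]mulrDr mul1r mulr1 -mulrA qq mulrA qa -mulrA qq.
have pUN : corner_unit p (-1 * (a * p)).
  by apply: (corner_unitMl mulN1N1 mulN1N1 _ apU); apply/esym/commrN1.
have qUN : corner_unit q (-1 * q).
  by apply: (corner_unitMl mulN1N1 mulN1N1 _ (corner_unit_idem qq)); apply/esym/commrN1.
exists (2 * (a * p) + (1 + a * q) * q), (-1 * (a * p) + -1 * q); split.
- exact: corner_unitD pp pU2 qU.
- exact: corner_unitD pp pUN qUN.
rewrite mulr_natl mulr2n mulrDl mul1r -mulrA qq !mulN1r.
by rewrite addrACA addrK (addrC q) addrK -mulrDr subrKC mulr1.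
Qed.

End CornerUnits.

Section Fitting.
Variables (T : pzRingType) (a x y : T) (k : nat).
Hypotheses (ax : a ^+ k = a ^+ k.+1 * x) (ya : a ^+ k = y * a ^+ k.+1).

Lemma fitting_exprR j : a ^+ k = a ^+ (k + j) * x ^+ j.
Proof.
elim: j => [|j IH]; first by rewrite addn0 expr0 mulr1.
rewrite {1}IH [(k + j)%N]addnC exprD ax -!mulrA -exprS mulrA -exprD.
by rewrite addnS -addSn addnC.
Qed.

Lemma fitting_exprL j : a ^+ k = y ^+ j * a ^+ (k + j).
Proof.
elim: j => [|j IH]; first by rewrite addn0 expr0 mul1r.
by rewrite {1}IH exprD ya !mulrA -exprSr -mulrA -exprD addSn -addnS.
Qed.

Let p := a ^+ k * x ^+ k.
Let b := a ^+ k * x ^+ k.+1.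

Let pE : p = y ^+ k * a ^+ k.
Proof. by rewrite /p {1}(fitting_exprL k) -mulrA -fitting_exprR. Qed.
Let bE : b = y ^+ k.+1 * a ^+ k.
Proof. by rewrite /b {1}(fitting_exprL k.+1) -mulrA -fitting_exprR. Qed.
Let ab : a * b = p.
Proof. by rewrite /b exprS mulrA -exprS mulrA -ax. Qed.
Let ba : b * a = p.
Proof. by rewrite bE -mulrA -exprSr exprSr -mulrA -ya -pE. Qed.
Let pb : p * b = b.
Proof. by rewrite pE /b -mulrA (mulrA (a ^+ k)) -exprD mulrA -fitting_exprL. Qed.
Let bp : b * p = b.
Proof. by rewrite {1}bE /p -mulrA (mulrA (a ^+ k)) -exprD -fitting_exprR -bE. Qed.
Let pp : p * p = p.
Proof. by rewrite -{1}ab -mulrA bp ab. Qed.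
Let ap : a * p = p * a.
Proof. by rewrite -{1}ba mulrA ab. Qed.

Lemma fitting_decomposition :
  exists p, [/\ p * p = p, a * p = p * a, corner_unit p (a * p)
              & (a * (1 - p)) ^+ k.+1 = 0].
Proof.
exists p; split=> //.
  split; first by split; rewrite ?[p * (a * p)]mulrA -?ap -mulrA pp.
  exists b; first by split.
  by split; [rewrite -mulrA pb ab | rewrite [b * (a * p)]mulrA ba pp].
have qa : (1 - p) * a = a * (1 - p) by rewrite mulrBl mulrBr mul1r mulr1 ap.
have qq : (1 - p) * (1 - p) = 1 - p by rewrite mulrBl mul1r mulrBr mulr1 pp subrr subr0.
have aqX j : (a * (1 - p)) ^+ j.+1 = a ^+ j.+1 * (1 - p).
  elim: j => [|j IH]; first by rewrite !expr1.
  by rewrite exprSr IH -mulrA [(1 - p) * _]mulrA qa -mulrA qq mulrA -exprSr.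
by rewrite aqX exprS -mulrA mulrBr mulr1 /p mulrA -exprD -fitting_exprR subrr mulr0.
Qed.

End Fitting.

Section StronglyPiRegular.
Variable T : pzRingType.
Implicit Types a : T.

Definition strongly_pi_regular a :=
  (exists k x, a ^+ k = a ^+ k.+1 * x) /\ (exists k y, a ^+ k = y * a ^+ k.+1).

Lemma strongly_pi_regular_sum_two_units (a h : T) : strongly_pi_regular a ->
  h * 2 = 1 -> 2 * h = 1 -> exists u v, [/\ invertible u, invertible v & a = u + v].
Proof.
move=> [[k1 [x ax]] [k2 [y ya]]] h2 h2'.
have axK : a ^+ (k1 + k2) = a ^+ (k1 + k2).+1 * x.
  by rewrite addnC exprD ax mulrA -exprD addnS.
have yaK : a ^+ (k1 + k2) = y * a ^+ (k1 + k2).+1.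
  by rewrite addnC exprD ya -mulrA -exprD addSn.
have [p [pp ap apU nil]] := fitting_decomposition axK yaK.
by apply: sum_two_units_of_fitting pp ap apU _ h2 h2'; exists (k1 + k2).+1.
Qed.

Lemma right_pi_regular_of_dependence (F : T) n (D : nat -> T) :
  (forall i, invertible (D i) \/ D i = 0) -> (exists2 i, (i < n)%N & invertible (D i)) ->
  \sum_(i < n) F ^+ i * D i = 0 -> exists k x, F ^+ k = F ^+ k.+1 * x.
Proof.
(* Strengthened to [F ^+ j * _ = 0], so that vanishing leading coefficients can
   be discarded. *)
rewrite -[X in X = 0 -> _]mul1r -(expr0 F).
elim: n 0%N D => [|n IH] j D DU [i lt_in Di] //.
rewrite big_ord_recl expr0 mul1r.
under eq_bigr do rewrite /= exprS -mulrA.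
rewrite -mulr_sumr mulrDr; set S := \sum_(i < n) _.
have [[w [D0w wD0]] | D00] := DU 0%N.
  move/eqP; rewrite addr_eq0 => /eqP FjD0; exists j, (- (S * w)).
  by rewrite -[F ^+ j]mulr1 -D0w mulrA FjD0 mulrN mulNr exprSr !mulrA.
rewrite D00 mulr0 add0r mulrA -exprSr.
case: i lt_in Di => [|i] lt_in Di Fs; last first.
  apply: (IH j.+1 (fun l => D l.+1)) Fs; [move=> l; exact: DU | by exists i].
have [w [+ _]] := Di; rewrite D00 mul0r => z1.
by exists j, 0; rewrite -[F ^+ j]mulr1 -z1 !mulr0.
Qed.

End StronglyPiRegular.

Lemma left_pi_regular_of_dependence (T : pzRingType) (F : T) n (D : nat -> T) :
  (forall i, invertible (D i) \/ D i = 0) -> (exists2 i, (i < n)%N & invertible (D i)) ->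
  \sum_(i < n) D i * F ^+ i = 0 -> exists k y, F ^+ k = y * F ^+ k.+1.
Proof.
have Cinv (x : T) : invertible x -> @invertible T^c x by case=> y [? ?]; exists y.
move=> DU [i lt_in Di] s0.
have [|||k [y Fy]] := @right_pi_regular_of_dependence T^c F n D.
- by move=> l; case: (DU l) => [/Cinv|]; [left|right].
- by exists i => //; apply: Cinv.
- by rewrite -[RHS]s0; apply: eq_bigr => l _; rewrite /= GRing.revrX.
by exists k, y; move: Fy; rewrite !GRing.revrX.
Qed.

Record radical_ideal (T : pzRingType) (P : T -> Prop) := RadicalIdeal {
  radical0 : P 0;
  radicalD : forall x y, P x -> P y -> P (x + y);
  radicalN : forall x, P x -> P (- x);
  radicalMl : forall r x, P x -> P (r * x);
  radicalMr : forall x r, P x -> P (x * r);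
  radical_invertible1D : forall x, P x -> invertible (1 + x) }.

Lemma radical_idealC (T : pzRingType) (P : T -> Prop) :
  radical_ideal P -> @radical_ideal T^c P.
Proof.
case=> P0 PD PN PMl PMr PU; split=> // [r x Px | x r Px | x /PU [w [? ?]]].
- exact: PMr.
- exact: PMl.
- by exists w.
Qed.

Section RadicalIdeal.
Variables (T : pzRingType) (P : T -> Prop) (radP : radical_ideal P).

Lemma radical_sum (I : finType) (F : I -> T) : (forall i, P (F i)) -> P (\sum_i F i).
Proof. by move=> PF; elim/big_ind: _ => //; [exact: radical0 | exact: radicalD]. Qed.

Lemma radicalB x y : P x -> P y -> P (x - y).
Proof. by move=> Px Py; apply: (radicalD radP) => //; apply: (radicalN radP). Qed.

Lemma near_identity_system_solvable n (A : 'I_n -> 'I_n -> T) (b : 'I_n -> T) :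
  (forall i j, P (A i j - (i == j)%:R)) ->
  exists z : 'I_n -> T, forall i, \sum_j A i j * z j = b i.
Proof.
elim: n A b => [|n IH] A b PA; first by exists (fun _ => 0) => [[]].
have [w [A00w wA00]] : invertible (A ord0 ord0).
  by have := PA ord0 ord0; rewrite eqxx => /(radical_invertible1D radP); rewrite addrC subrK.
have PA0 i : P (A (lift ord0 i) ord0).
  by have := PA (lift ord0 i) ord0; rewrite eq_sym (negbTE (neq_lift _ _)) subr0.
pose A' i j := A (lift ord0 i) (lift ord0 j) - A (lift ord0 i) ord0 * (w * A ord0 (lift ord0 j)).
pose b' i := b (lift ord0 i) - A (lift ord0 i) ord0 * (w * b ord0).
have [z' Az'] : exists z' : 'I_n -> T, forall i, \sum_j A' i j * z' j = b' i.
  apply: IH => i j; rewrite /A' addrAC; apply: radicalB; last exact: (radicalMr radP).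
  by have := PA (lift ord0 i) (lift ord0 j); rewrite (inj_eq (@lift_inj _ ord0)).
pose s := \sum_j A ord0 (lift ord0 j) * z' j.
exists (fun j => if unlift ord0 j is Some j' then z' j' else w * (b ord0 - s)) => i.
rewrite big_ord_recl unlift_none; under eq_bigr do rewrite liftK.
case: (unliftP ord0 i) => [i'|] ->; last by rewrite mulrA A00w mul1r subrK.
have A'E : \sum_j A' i' j * z' j =
    \sum_j A (lift ord0 i') (lift ord0 j) * z' j - A (lift ord0 i') ord0 * (w * s).
  by rewrite /s !mulr_sumr -sumrB; apply: eq_bigr => j _; rewrite mulrBl !mulrA.
have := Az' i'; rewrite A'E /b' => /eqP; rewrite subr_eq => /eqP ->.
by rewrite !mulrBr addrCA !addrA addrNK subrK.
Qed.

Hypotheses (P1 : ~ P 1) (P_local : forall x, P x \/ invertible x).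

Lemma dependent_mod_local_ideal n (v : 'I_n.+1 -> 'I_n -> T) :
  exists d : 'I_n.+1 -> T, (exists i, ~ P (d i)) /\ forall k, P (\sum_i v i k * d i).
Proof.
elim: n v => [|n IH] v; first by exists (fun _ => 1); split; [exists ord0 | case].
have [v0P|] := pselect (forall i, P (v i ord0)).
  have [d' [[i0 d'i0] Pd']] := IH (fun i k => v (lift ord0 i) (lift ord0 k)).
  exists (fun i => if unlift ord0 i is Some i' then d' i' else 0).
  split; first by exists (lift ord0 i0); rewrite liftK.
  move=> k; case: (unliftP ord0 k) => [k'|] ->; last first.
    by apply: radical_sum => i; apply: (radicalMr radP).
  rewrite big_ord_recl unlift_none mulr0 add0r.
  by under eq_bigr do rewrite liftK.
move=> /existsNP [j vj0]; have [//|[w [vj0w wvj0]]] := P_local (v j ord0).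
pose c i := w * v (lift j i) ord0.
have [d' [[i0 d'i0] Pd']] := IH (fun i k => v (lift j i) (lift ord0 k) - v j (lift ord0 k) * c i).
pose dj := - \sum_i c i * d' i.
exists (fun i => if unlift j i is Some i' then d' i' else dj).
split; first by exists (lift j i0); rewrite liftK.
have dE k : \sum_i v i k * (if unlift j i is Some i' then d' i' else dj) =
    \sum_i (v (lift j i) k - v j k * c i) * d' i.
  rewrite (bigD1_ord j) //= unlift_none; under eq_bigr do rewrite liftK.
  rewrite /dj mulrN mulr_sumr -sumrN -big_split /=.
  by apply: eq_bigr => i _; rewrite mulrBl !mulrA addrC.
move=> k; rewrite dE; case: (unliftP ord0 k) => [k'|] ->; first exact: Pd'.
apply: radical_sum => i; rewrite /c mulrA vj0w mul1r subrr mul0r; exact: radical0.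
Qed.

End RadicalIdeal.

Lemma dependent_mod_local_idealL (T : pzRingType) (P : T -> Prop) n
    (v : 'I_n.+1 -> 'I_n -> T) :
  radical_ideal P -> ~ P 1 -> (forall x, P x \/ invertible x) ->
  exists d : 'I_n.+1 -> T, (exists i, ~ P (d i)) /\ forall k, P (\sum_i d i * v i k).
Proof.
move=> radP P1 P_local; apply: (@dependent_mod_local_ideal T^c P (radical_idealC radP) P1).
by move=> x; case: (P_local x) => [|[w [? ?]]]; [left | right; exists w].
Qed.

Section TwoSidedQuotient.
Variables (T : pzRingType) (I : zmodClosed T).
Hypotheses (idealMl : forall a i, i \in I -> a * i \in I)
           (idealMr : forall i a, i \in I -> i * a \in I).
Local Notation Q := (Quotient.quot I).

Definition quot_one : Q := lift_cst Q 1.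
Definition quot_mul := lift_op2 Q *%R.
Canonical pi_quot_one_morph := PiConst quot_one.

Lemma pi_quot_mul : {morph \pi_Q : x y / x * y >-> quot_mul x y}.
Proof.
move=> x y; unlock quot_mul; apply/eqP; rewrite piE Quotient.equivE.
have Ix : x - repr (\pi_Q x) \in I by rewrite Quotient.idealrBE reprK.
have Iy : y - repr (\pi_Q y) \in I by rewrite Quotient.idealrBE reprK.
rewrite -[x * y](subrK (x * repr (\pi_Q y))) -mulrBr -addrA -mulrBl.
by apply: rpredD; [exact: idealMl | exact: idealMr].
Qed.
Canonical pi_quot_mul_morph := PiMorph2 pi_quot_mul.

Lemma quot_mulA : associative quot_mul.
Proof. by move=> x y z; rewrite -[x]reprK -[y]reprK -[z]reprK !piE mulrA. Qed.
Lemma quot_mul1q : left_id quot_one quot_mul.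
Proof. by move=> x; rewrite -[x]reprK !piE mul1r. Qed.
Lemma quot_mulq1 : right_id quot_one quot_mul.
Proof. by move=> x; rewrite -[x]reprK !piE mulr1. Qed.
Lemma quot_mulDl : left_distributive quot_mul +%R.
Proof. by move=> x y z; rewrite -[x]reprK -[y]reprK -[z]reprK !piE mulrDl. Qed.
Lemma quot_mulDr : right_distributive quot_mul +%R.
Proof. by move=> x y z; rewrite -[x]reprK -[y]reprK -[z]reprK !piE mulrDr. Qed.

End TwoSidedQuotient.

(* The ring structure depends on I being two-sided, hence the proof arguments. *)
Definition ideal_quot (T : pzRingType) (I : zmodClosed T)
  (idealMl : forall a i, i \in I -> a * i \in I)
  (idealMr : forall i a, i \in I -> i * a \in I) := Quotient.quot I.

(* [\pi] with its codomain typed as [ideal_quot], where its ring morphism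
   instances are declared. *)
Definition quot_proj (T : pzRingType) (I : zmodClosed T) idealMl idealMr
  : T -> @ideal_quot T I idealMl idealMr := \pi_(Quotient.quot I).

Section IdealQuot.
Variables (T : pzRingType) (I : zmodClosed T).
Hypotheses (idealMl : forall a i, i \in I -> a * i \in I)
           (idealMr : forall i a, i \in I -> i * a \in I).
Local Notation Q := (ideal_quot idealMl idealMr).
Local Notation proj := (quot_proj idealMl idealMr).

HB.instance Definition _ := GRing.Zmodule.on Q.
HB.instance Definition _ := GRing.Zmodule_isPzRing.Build Q
  (quot_mulA idealMl idealMr) (quot_mul1q idealMl idealMr) (quot_mulq1 idealMl idealMr)
  (quot_mulDl idealMl idealMr) (quot_mulDr idealMl idealMr).

Lemma quot_proj_is_zmod_morphism : zmod_morphism proj.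
Proof. by move=> x y; rewrite /quot_proj !piE. Qed.

Lemma quot_proj_is_monoid_morphism : monoid_morphism proj.
Proof. by split=> [|x y]; rewrite /quot_proj piE. Qed.

HB.instance Definition _ :=
  GRing.isZmodMorphism.Build T Q proj quot_proj_is_zmod_morphism.
HB.instance Definition _ :=
  GRing.isMonoidMorphism.Build T Q proj quot_proj_is_monoid_morphism.

Lemma quot_projP x y : proj x = proj y <-> x - y \in I.
Proof. by rewrite Quotient.idealrBE; split=> /eqP. Qed.

Lemma quot_proj_surj X : exists x, proj x = X.
Proof. by exists (repr X); rewrite /quot_proj reprK. Qed.

End IdealQuot.

Section LocalRing.
Variable R : unitRingType.
Implicit Types a b x : R.

Lemma invertible_unitE x : invertible x <-> x \is a GRing.unit.
Proof.
split=> [[y [xy yx]] | /unitrP[y [yx xy]]]; last by exists y.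
by apply/unitrP; exists y.
Qed.

Lemma unitr_1Bmul_swap a b :
  (1 - a * b) \is a GRing.unit -> (1 - b * a) \is a GRing.unit.
Proof.
move=> Uab; set c := (1 - a * b)^-1; set X := b * c * a.
have E1 : X - X * (b * a) = b * a.
  have -> : X - X * (b * a) = b * (c * (1 - a * b)) * a.
    by rewrite /X mulrBr mulr1 mulrBr mulrBl !mulrA.
  by rewrite mulVr // mulr1.
have E2 : X - b * a * X = b * a.
  have -> : X - b * a * X = b * ((1 - a * b) * c) * a.
    by rewrite /X mulrBl mul1r mulrBr mulrBl !mulrA.
  by rewrite mulrV // mulr1.
apply/unitrP; exists (1 + X); split.
  by rewrite mulrBr mulr1 mulrDl mul1r opprD addrACA E1 subrK.
by rewrite mulrBl mul1r mulrDr mulr1 opprD addrACA E2 subrK.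
Qed.

Lemma jacobson_radical_ideal : radical_ideal (@jacobson R).
Proof.
split.
- by move=> r; rewrite mulr0 subr0 unitr1.
- move=> x y Jx Jy r; have Ux := Jx r.
  have -> : 1 - r * (x + y) = (1 - r * x) * (1 - ((1 - r * x)^-1 * r) * y).
    by rewrite mulrBr mulr1 !mulrA mulrV // mul1r mulrDr opprD addrA.
  by rewrite unitrMl // Jy.
- by move=> x Jx r; rewrite mulrN -mulNr; apply: Jx.
- by move=> r x Jx s; rewrite mulrA; apply: Jx.
- by move=> x r Jx s; rewrite mulrA; apply: unitr_1Bmul_swap; rewrite mulrA; apply: Jx.
- by move=> x Jx; apply/invertible_unitE; have := Jx (-1); rewrite mulN1r opprK.
Qed.

Hypothesis localR : local_ring R.

Lemma local_unit x : ~ jacobson x -> x \is a GRing.unit.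
Proof.
case: localR => _ invJ /invJ [y [Jxy Jyx]]; apply/invertible_unitE.
have inv1D := radical_invertible1D jacobson_radical_ideal.
by apply: (@invertible_of_mul _ x y y); [move/inv1D: Jxy | move/inv1D: Jyx];
  rewrite addrC subrK.
Qed.

Lemma local_jacobsonVinvertible x : jacobson x \/ invertible x.
Proof.
by have [|/local_unit/invertible_unitE] := pselect (jacobson x); [left | right].
Qed.

End LocalRing.

Section GroupRing.
Variables (R : unitRingType) (m : nat).
Local Notation S := (grring R m.+1).

Lemma gr_mulE (a b : S) k : gr_mul a b k = \sum_i a i * b (k - i).
Proof.
rewrite /gr_mul ffunE; apply: eq_bigr => i _.
rewrite (eq_bigr (fun j => if j == k - i then a i * b j else 0)).
  by rewrite -big_mkcond big_pred1_eq.
move=> j _; congr (if _ then _ else _).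
have -> : ((i + j) %% m.+1)%N = val (i + j) by [].
by rewrite val_eqE [RHS]eq_sym subr_eq addrC eq_sym.
Qed.

Lemma gr_oneE k : gr_one R m.+1 k = if k == 0 then 1 else 0.
Proof. by rewrite ffunE. Qed.

Lemma gr_mulA : associative (@gr_mul R m.+1).
Proof.
move=> a b c; apply/ffunP => k; rewrite !gr_mulE.
under [RHS]eq_bigr do rewrite gr_mulE mulr_suml.
rewrite [RHS]exchange_big /=; apply: eq_bigr => i _.
rewrite gr_mulE mulr_sumr [RHS](reindex_inj (addIr i)) /=.
apply: eq_bigr => t _; rewrite addrK mulrA; congr (_ * _ * c _).
by rewrite opprD addrA addrAC.
Qed.

Lemma gr_mul1l : left_id (gr_one R m.+1) (@gr_mul R m.+1).
Proof.
move=> a; apply/ffunP => k; rewrite gr_mulE (bigD1 0) //= gr_oneE eqxx mul1r subr0.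
by rewrite big1 ?addr0 // => i /negbTE i0; rewrite gr_oneE i0 mul0r.
Qed.

Lemma gr_mul1r : right_id (gr_one R m.+1) (@gr_mul R m.+1).
Proof.
move=> a; apply/ffunP => k; rewrite gr_mulE (bigD1 k) //= gr_oneE subrr eqxx mulr1.
rewrite big1 ?addr0 // => i ik; rewrite gr_oneE subr_eq0 eq_sym (negbTE ik).
by rewrite mulr0.
Qed.

Lemma gr_mulDl : left_distributive (@gr_mul R m.+1) +%R.
Proof.
move=> a b c; apply/ffunP => k; rewrite gr_mulE [RHS]ffunE !gr_mulE -big_split /=.
by apply: eq_bigr => i _; rewrite ffunE mulrDl.
Qed.

Lemma gr_mulDr : right_distributive (@gr_mul R m.+1) +%R.
Proof.
move=> a b c; apply/ffunP => k; rewrite gr_mulE [RHS]ffunE !gr_mulE -big_split /=.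
by apply: eq_bigr => i _; rewrite ffunE mulrDr.
Qed.

Lemma gr_one_neq0 : gr_one R m.+1 != 0.
Proof.
by apply/eqP => /ffunP /(_ 0); rewrite gr_oneE eqxx ffunE => /eqP; rewrite oner_eq0.
Qed.

End GroupRing.

(* The group ring of C_(m.+1); the shift makes it a nonzero ring. *)
Definition gring (R : unitRingType) (m : nat) := grring R m.+1.
HB.instance Definition _ R m := GRing.Zmodule.copy (gring R m) {ffun 'I_m.+1 -> R}.
HB.instance Definition _ R m := GRing.Zmodule_isNzRing.Build (gring R m)
  (@gr_mulA R m) (@gr_mul1l R m) (@gr_mul1r R m) (@gr_mulDl R m) (@gr_mulDr R m)
  (@gr_one_neq0 R m).

Definition gscalar (R : unitRingType) (m : nat) (c : R) : gring R m :=
  [ffun k => if k == 0 then c else 0].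

Section GroupRingCoef.
Variables (R : unitRingType) (m : nat).
Implicit Types (a b : gring R m) (c d : R).

Lemma gring_mulE a b k : (a * b) k = \sum_i a i * b (k - i).
Proof. exact: gr_mulE. Qed.

Lemma gscalarE c k : gscalar m c k = if k == 0 then c else 0.
Proof. by rewrite ffunE. Qed.

Lemma gring_mul_scalarE a c k : (a * gscalar m c) k = a k * c.
Proof.
rewrite gring_mulE (bigD1 k) //= gscalarE subrr eqxx big1 ?addr0 // => i ik.
by rewrite gscalarE subr_eq0 eq_sym (negbTE ik) mulr0.
Qed.

Lemma gring_scalar_mulE c a k : (gscalar m c * a) k = c * a k.
Proof.
rewrite gring_mulE (bigD1 0) //= gscalarE eqxx subr0 big1 ?addr0 // => i i0.
by rewrite gscalarE (negbTE i0) mul0r.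
Qed.

Lemma gscalar_is_zmod_morphism : zmod_morphism (@gscalar R m).
Proof.
by move=> c d; apply/ffunP => k; rewrite !ffunE; case: eqP; rewrite ?subr0.
Qed.

Lemma gscalar_is_monoid_morphism : monoid_morphism (@gscalar R m).
Proof.
split=> [|c d]; first by apply/ffunP => k; rewrite !ffunE.
by apply/ffunP => k; rewrite gring_mul_scalarE !gscalarE; case: eqP; rewrite ?mul0r.
Qed.

End GroupRingCoef.

HB.instance Definition _ (R : unitRingType) m :=
  GRing.isZmodMorphism.Build R (gring R m) (@gscalar R m) (@gscalar_is_zmod_morphism R m).
HB.instance Definition _ (R : unitRingType) m :=
  GRing.isMonoidMorphism.Build R (gring R m) (@gscalar R m) (@gscalar_is_monoid_morphism R m).

Section GroupRingRadical.
Variables (R : unitRingType) (m : nat).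
Local Notation G := (gring R m).
Implicit Types a i : G.

Definition coef_jacobson a := forall k, jacobson (a k).

Let radJ := jacobson_radical_ideal R.

Lemma gring1E k : (1 : G) k = (k == 0)%:R.
Proof. by rewrite [LHS]gr_oneE; case: eqP. Qed.

Lemma coef_jacobsonMl a i : coef_jacobson i -> coef_jacobson (a * i).
Proof.
by move=> Ji k; rewrite gring_mulE; apply: (radical_sum radJ) => l; apply: (radicalMl radJ).
Qed.

Lemma coef_jacobsonMr i a : coef_jacobson i -> coef_jacobson (i * a).
Proof.
by move=> Ji k; rewrite gring_mulE; apply: (radical_sum radJ) => l; apply: (radicalMr radJ).
Qed.

Lemma coef_jacobson_1D_rinv i : coef_jacobson i -> exists w, (1 + i) * w = 1.
Proof.
move=> Ji; pose A k j := (1 + i) (k - j).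
have A1 k j : jacobson (A k j - (k == j)%:R).
  by rewrite /A ffunE gring1E subr_eq0 addrAC subrr add0r.
have [z Az] := near_identity_system_solvable radJ (fun k => (1 : G) k) A1.
exists [ffun j => z j]; apply/ffunP => k; rewrite gring_mulE (reindex_inj (subrI k)) /=.
by rewrite -Az; apply: eq_bigr => j _; rewrite /A !ffunE subKr.
Qed.

Lemma coef_jacobson_radical : radical_ideal coef_jacobson.
Proof.
have J0 : coef_jacobson 0 by move=> k; rewrite ffunE; apply: radical0 radJ.
have JD a b : coef_jacobson a -> coef_jacobson b -> coef_jacobson (a + b).
  by move=> Ja Jb k; rewrite ffunE; apply: (radicalD radJ).
have JN a : coef_jacobson a -> coef_jacobson (- a).
  by move=> Ja k; rewrite ffunE; apply: (radicalN radJ).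
split=> //; [exact: coef_jacobsonMl | exact: coef_jacobsonMr | move=> i Ji].
have [z iz1] := coef_jacobson_1D_rinv Ji.
have zE : z = 1 + - (i * z).
  by apply/eqP; rewrite -subr_eq opprK -{1}[z]mul1r -mulrDl iz1.
have [w zw1] : exists w, z * w = 1.
  by rewrite zE; apply: coef_jacobson_1D_rinv; apply/JN/coef_jacobsonMr.
have wE : w = 1 + i by rewrite -[w]mul1r -{1}iz1 -mulrA zw1 mulr1.
by exists z; split; last rewrite -wE.
Qed.

End GroupRingRadical.

Section GroupRingModRadical.
Variables (R : unitRingType) (m : nat).
Hypotheses (localR : local_ring R) (char2 : char_quot_not2 R).
Local Notation G := (gring R m).
Implicit Types a : G.

Let radJ := jacobson_radical_ideal R.
Let radCJ := coef_jacobson_radical R m.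

Definition coef_jacobsonb : {pred G} := fun a => `[< coef_jacobson a >].

Lemma coef_jacobsonb_zmod_closed : zmod_closed coef_jacobsonb.
Proof.
split=> [|a b /asboolP Ja /asboolP Jb]; apply/asboolP; first exact: radical0 radCJ.
by apply: (radicalD radCJ) => //; apply: (radicalN radCJ).
Qed.

HB.instance Definition _ :=
  GRing.isZmodClosed.Build G coef_jacobsonb coef_jacobsonb_zmod_closed.

Lemma coef_jacobsonbMl a i : i \in coef_jacobsonb -> a * i \in coef_jacobsonb.
Proof. by move=> /asboolP Ji; apply/asboolP/coef_jacobsonMl. Qed.

Lemma coef_jacobsonbMr i a : i \in coef_jacobsonb -> i * a \in coef_jacobsonb.
Proof. by move=> /asboolP Ji; apply/asboolP/coef_jacobsonMr. Qed.

Local Notation Q := (ideal_quot coef_jacobsonbMl coef_jacobsonbMr).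
Local Notation proj := (quot_proj coef_jacobsonbMl coef_jacobsonbMr).

Lemma proj_eq0 a : coef_jacobson a -> proj a = 0.
Proof.
by move=> Ja; rewrite -(rmorph0 proj); apply/quot_projP; rewrite subr0; apply/asboolP.
Qed.

Lemma proj_scalar_invertible c : ~ jacobson c -> invertible (proj (gscalar m c)).
Proof.
move=> /(local_unit localR) /unitrP [w [wc cw]].
by exists (proj (gscalar m w)); rewrite -!rmorphM wc cw !rmorph1.
Qed.

Lemma proj_scalar_invertible_or0 c :
  invertible (proj (gscalar m c)) \/ proj (gscalar m c) = 0.
Proof.
have [Jc|/proj_scalar_invertible] := pselect (jacobson c); [right | by left].
apply: proj_eq0 => k; rewrite gscalarE; case: eqP => // _; exact: radical0 radJ.
Qed.

Lemma proj_strongly_pi_regular a : strongly_pi_regular (proj a).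
Proof.
(* The coefficient vectors of a^0, ..., a^(m.+1) are m.+2 vectors of R^(m.+1). *)
have P1 : ~ jacobson (1 : R) by case: localR.
have Pl := local_jacobsonVinvertible localR.
pose v (i : 'I_m.+2) k := (a ^+ i) k.
pose D (d : 'I_m.+2 -> R) i := proj (gscalar m (d (inord i))).
have DU d i : invertible (D d i) \/ D d i = 0 by apply: proj_scalar_invertible_or0.
have Dex d : (exists i, ~ jacobson (d i)) -> exists2 i, (i < m.+2)%N & invertible (D d i).
  by case=> i Ji; exists i => //; rewrite /D inord_val; apply: proj_scalar_invertible.
split.
  have [d [dex Jd]] := dependent_mod_local_ideal radJ P1 Pl v.
  apply: (right_pi_regular_of_dependence (DU d) (Dex d dex)).
  under eq_bigr do rewrite /D inord_val -rmorphXn -rmorphM.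
  rewrite -rmorph_sum; apply: proj_eq0 => k; rewrite sum_ffunE.
  by under eq_bigr do rewrite gring_mul_scalarE; apply: Jd.
have [d [dex Jd]] := dependent_mod_local_idealL v radJ P1 Pl.
apply: (left_pi_regular_of_dependence (DU d) (Dex d dex)).
under eq_bigr do rewrite /D inord_val -rmorphXn -rmorphM.
rewrite -rmorph_sum; apply: proj_eq0 => k; rewrite sum_ffunE.
by under eq_bigr do rewrite gring_scalar_mulE; apply: Jd.
Qed.

Lemma proj_invertible_lift a : invertible (proj a) -> invertible a.
Proof.
case=> X [aX Xa]; have [x xX] := quot_proj_surj X.
have lift_one b : proj b = 1 -> invertible b.
  move=> /esym; rewrite -(rmorph1 proj) => /quot_projP /asboolP /(radicalN radCJ).
  by rewrite opprB => /(radical_invertible1D radCJ); rewrite subrKC.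
by apply: (@invertible_of_mul _ a x x); apply: lift_one; rewrite rmorphM /= xX.
Qed.

Lemma gring_sum_two_units a : exists u v, [/\ invertible u, invertible v & a = u + v].
Proof.
have U2 : (2%:R : R) \is a GRing.unit by apply: local_unit.
pose h := proj (gscalar m 2%:R^-1).
have two : 2%:R = proj (gscalar m 2%:R) by rewrite !rmorph_nat.
have [h2 h2'] : h * 2%:R = 1 /\ 2%:R * h = 1.
  by rewrite two -!rmorphM mulVr // mulrV // !rmorph1.
have [U [V [UU UV aUV]]] :=
  strongly_pi_regular_sum_two_units (proj_strongly_pi_regular a) h2 h2'.
have [u uU] := quot_proj_surj U.
exists u, (a - u); split; last by rewrite addrC subrK.
  by apply: proj_invertible_lift; rewrite uU.
by apply: proj_invertible_lift; rewrite rmorphB /= aUV uU addrC addKr.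
Qed.

End GroupRingModRadical.

Theorem theorem10 (R : unitRingType) (n : nat) :
  (0 < n)%N -> local_ring R -> char_quot_not2 R -> gr_two_good R n.
Proof.
case: n => [//|m] _ localR char2 a.
by have [u [v [Uu Uv ->]]] := gring_sum_two_units localR char2 (a : gring R m); exists u, v.
Qed.
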